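(* Let $\alpha,\beta,\gamma\in\mathbb{C}$ and $k\in\mathbb{N}$, and consider the difference equation $$z_{n+1}=\frac{\alpha+\beta z_{n-k}}{\gamma-z_n},\qquad n=0,1,2,\ldots,$$ with complex initial conditions $z_{-k},\dots,z_{-1},z_0$. Let $s=\sqrt{(\beta-\gamma)^2-4\alpha}=\sqrt{-4\alpha+\beta^2-2\beta\gamma+\gamma^2}$ and let $\bar z_1=\frac{1}{2}\left(-s-\beta+\gamma\right)$, which is a fixed point of the equation. If $$\left|\frac{2\beta}{s+\beta+\gamma}\right|+\left|\frac{\gamma\left(-s-\beta+\gamma\right)-2\alpha}{2(\alpha+\beta\gamma)}\right|<1,$$ then $\bar z_1$ is locally asymptotically stable.
   Context: Here $\sqrt{\cdot}$ denotes a fixed complex square root, used consistently in all occurrences. A fixed point $\bar z$ of $z_{n+1}=f(z_n,\dots,z_{n-k})$ is a point with $\bar z=f(\bar z,\dots,\bar z)$. It is locally asymptotically stable if for every $\epsilon>0$ there is $\delta>0$ such that $|z_{-k}-\bar z|+\dots+|z_0-\bar z|<\delta$ implies $|z_n-\bar z|<\epsilon$ for all $n\ge -k$ (and solutions converge to $\bar z$), as determined via the linearization of the equation at $\bar z$. *)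

From Stdlib Require Import Reals.
From Coquelicot Require Import Coquelicot.
Open Scope R_scope.

(* A solution (z_n)_{n >= -k} is encoded as x : nat -> C with x m = z_{m-k}.
   So x 0, ..., x k are the initial conditions z_{-k}, ..., z_0, and the
   recurrence z_{n+1} = (alpha + beta z_{n-k}) / (gamma - z_n) becomes
   x (n+k+1) = (alpha + beta * x n) / (gamma - x (n+k)). *)
Definition is_solution (alpha beta gamma : C) (k : nat) (x : nat -> C) : Prop :=
  forall n : nat, x (n + k + 1)%nat = ((alpha + beta * x n) / (gamma - x (n + k)%nat))%C.

Definition is_fixed_point (alpha beta gamma zb : C) : Prop :=
  zb = ((alpha + beta * zb) / (gamma - zb))%C.

Definition init_dist (k : nat) (x : nat -> C) (zb : C) : R :=
  sum_f_R0 (fun i => Cmod (x i - zb)%C) k.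

Definition loc_asympt_stable (alpha beta gamma : C) (k : nat) (zb : C) : Prop :=
  (forall eps : R, 0 < eps -> exists delta : R, 0 < delta /\
     forall x : nat -> C, is_solution alpha beta gamma k x ->
       init_dist k x zb < delta -> forall n : nat, Cmod (x n - zb)%C < eps)
  /\
  (exists delta : R, 0 < delta /\
     forall x : nat -> C, is_solution alpha beta gamma k x ->
       init_dist k x zb < delta ->
       forall eps : R, 0 < eps -> exists N : nat, forall n : nat, (N <= n)%nat ->
         Cmod (x n - zb)%C < eps).

From Stdlib Require Import Reals.
From Coquelicot Require Import Coquelicot.
From Stdlib Require Import Lra Lia.
Open Scope R_scope.

(* Write e_n := z_n - zb and D := gamma - zb.  Because zb is a fixed point, the
   errors obey e_{n+1} = (zb e_n + beta e_{n-k}) / (D - e_n), whose linear part has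
   coefficients zb/D and beta/D; the hypothesis of the theorem says exactly that
   |zb| + |beta| < |D|.  Then some q < 1 and r > 0 satisfy |zb| + |beta| = q (|D| - r),
   and as long as the last k+1 errors are at most B <= r the next one is at most q B.
   Hence errors starting below r shrink by a factor q every k+1 steps. *)

Lemma Cmod_sub_ge (u v : C) : Cmod u - Cmod v <= Cmod (u - v).
Proof.
  assert (H := Cmod_triangle (u - v) v).
  replace (u - v + v)%C with u in H by ring.
  lra.
Qed.

Lemma sum_f_R0_ge_term (f : nat -> R) (k i : nat) :
  (forall j, 0 <= f j) -> (i <= k)%nat -> f i <= sum_f_R0 f k.
Proof.
  intros Hf. induction k as [|k IHk]; intros Hi.
  - replace i with 0%nat by lia. simpl. lra.
  - simpl. destruct (Nat.eq_dec i (S k)) as [-> | Hne].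
    + assert (H := cond_pos_sum f k Hf). lra.
    + assert (f i <= sum_f_R0 f k) by (apply IHk; lia).
      specialize (Hf (S k)). lra.
Qed.

Lemma contraction_margin (a d : R) :
  0 <= a < d -> exists q r, 0 <= q < 1 /\ 0 < r < d /\ a = q * (d - r).
Proof.
  intros Ha.
  exists (2 * a / (d + a)), ((d - a) / 2).
  repeat split.
  - apply Rmult_le_pos; [lra | left; apply Rinv_0_lt_compat; lra].
  - apply Rmult_lt_reg_r with (d + a); [lra |].
    unfold Rdiv. rewrite Rmult_assoc, Rinv_l by lra. lra.
  - lra.
  - lra.
  - field. lra.
Qed.

Lemma pow_mul_lt_eventually (q M eps : R) :
  0 <= q < 1 -> 0 <= M -> 0 < eps -> exists J, q ^ J * M < eps.
Proof.
  intros Hq HM Heps.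
  destruct (pow_lt_1_zero q ltac:(rewrite Rabs_right; lra) (eps / (M + 1))
             ltac:(apply Rdiv_lt_0_compat; lra)) as [J HJ].
  exists J. specialize (HJ J (le_n J)).
  assert (HqJ : 0 <= q ^ J) by (apply pow_le; lra).
  rewrite Rabs_right in HJ by lra.
  assert (q ^ J * (M + 1) < eps).
  { apply Rmult_lt_reg_r with (/ (M + 1)); [apply Rinv_0_lt_compat; lra |].
    rewrite Rmult_assoc, Rinv_r by lra. lra. }
  nra.
Qed.

Section ErrorRecurrence.

Variables (a b D : C) (k : nat) (e : nat -> C) (q r : R).

Hypothesis e_rec : forall m, (D - e (m + k))%C <> 0%C ->
  e (m + k + 1)%nat = ((a * e (m + k)%nat + b * e m) / (D - e (m + k)%nat))%C.
Hypothesis q_ge0 : 0 <= q.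
Hypothesis q_le1 : q <= 1.
Hypothesis r_lt_D : r < Cmod D.
Hypothesis coef_margin : Cmod a + Cmod b <= q * (Cmod D - r).

Lemma error_step_bound (u v : C) (B : R) :
  Cmod u <= B -> Cmod v <= B -> B <= r ->
  (D - u)%C <> 0%C /\ Cmod ((a * u + b * v) / (D - u))%C <= q * B.
Proof.
  intros Hu Hv HB.
  assert (Hden : Cmod D - r <= Cmod (D - u)) by (assert (H := Cmod_sub_ge D u); lra).
  assert (Hne : (D - u)%C <> 0%C).
  { intro E. rewrite E, Cmod_0 in Hden. lra. }
  split; [exact Hne |].
  assert (Hnum : Cmod (a * u + b * v)%C <= (Cmod a + Cmod b) * B).
  { eapply Rle_trans; [apply Cmod_triangle |]. rewrite !Cmod_mult.
    assert (H1 := Cmod_ge_0 a). assert (H2 := Cmod_ge_0 b). nra. }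
  rewrite Cmod_div by exact Hne.
  assert (Hpos : 0 < Cmod (D - u)) by lra.
  apply Rmult_le_reg_r with (Cmod (D - u)); [exact Hpos |].
  unfold Rdiv. rewrite Rmult_assoc, Rinv_l by lra.
  assert (HB0 : 0 <= B) by (assert (H0 := Cmod_ge_0 u); lra).
  assert (HqB : 0 <= q * B) by (apply Rmult_le_pos; lra).
  rewrite Rmult_1_r.
  apply Rle_trans with (q * (Cmod D - r) * B); [nra |].
  nra.
Qed.

Lemma error_decay (M : R) :
  M <= r -> (forall i, (i <= k)%nat -> Cmod (e i) <= M) ->
  forall n j, (j * (k + 1) <= n)%nat -> Cmod (e n) <= q ^ j * M.
Proof.
  intros HMr Hinit.
  assert (HM0 : 0 <= M) by (assert (H := Hinit 0%nat (Nat.le_0_l k));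
                             assert (H0 := Cmod_ge_0 (e 0%nat)); lra).
  assert (Hpow : forall j, 0 <= q ^ j <= 1).
  { intro j. split; [apply pow_le; lra | rewrite <- (pow1 j); apply pow_incr; lra]. }
  intro n. induction n as [n IH] using (well_founded_induction Wf_nat.lt_wf).
  intros j Hj.
  destruct (Compare_dec.le_lt_dec n k) as [Hnk | Hkn].
  - replace j with 0%nat by nia. simpl. rewrite Rmult_1_l. apply Hinit, Hnk.
  - set (m := (n - k - 1)%nat).
    replace n with (m + k + 1)%nat by (unfold m; lia).
    assert (Hjm : (Nat.pred j * (k + 1) <= m)%nat) by (unfold m; destruct j; nia).
    assert (Hlast : Cmod (e (m + k)%nat) <= q ^ Nat.pred j * M) by (apply IH; lia).
    assert (Hfirst : Cmod (e m) <= q ^ Nat.pred j * M) by (apply IH; lia).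
    assert (HB : q ^ Nat.pred j * M <= r) by (specialize (Hpow (Nat.pred j)); nra).
    destruct (error_step_bound _ _ _ Hlast Hfirst HB) as [Hne Hstep].
    rewrite e_rec by exact Hne.
    eapply Rle_trans; [exact Hstep |].
    destruct j as [|j]; simpl; [nra | lra].
Qed.

End ErrorRecurrence.

Lemma quadratic_root_fixed_point_eq (alpha beta gamma s : C) :
  (s * s)%C = ((beta - gamma) * (beta - gamma) - 4 * alpha)%C ->
  let zb := (/ 2 * (- s - beta + gamma))%C in
  (zb * (gamma - zb))%C = (alpha + beta * zb)%C.
Proof.
  intros Hs zb.
  transitivity (alpha + beta * zb
                - / 4 * (s * s - ((beta - gamma) * (beta - gamma) - 4 * alpha)))%C.
  - unfold zb. field.
  - rewrite Hs. ring.
Qed.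

Lemma is_fixed_point_of_eq (alpha beta gamma zb : C) :
  (zb * (gamma - zb))%C = (alpha + beta * zb)%C -> (gamma - zb)%C <> 0%C ->
  is_fixed_point alpha beta gamma zb.
Proof.
  intros Hzb HD. unfold is_fixed_point. rewrite <- Hzb. field. exact HD.
Qed.

Lemma solution_error_rec (alpha beta gamma zb : C) (k : nat) (x : nat -> C) :
  (zb * (gamma - zb))%C = (alpha + beta * zb)%C ->
  is_solution alpha beta gamma k x ->
  forall m, ((gamma - zb) - (x (m + k)%nat - zb))%C <> 0%C ->
  (x (m + k + 1)%nat - zb)%C
  = ((zb * (x (m + k)%nat - zb) + beta * (x m - zb))
     / ((gamma - zb) - (x (m + k)%nat - zb)))%C.
Proof.
  intros Hzb Hx m Hne.
  replace ((gamma - zb) - (x (m + k)%nat - zb))%C with (gamma - x (m + k)%nat)%C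
    in Hne |- * by ring.
  rewrite Hx.
  replace alpha with (zb * (gamma - zb) - beta * zb)%C
    by (rewrite Hzb; ring).
  field. exact Hne.
Qed.

Lemma init_dist_ge (k : nat) (x : nat -> C) (zb : C) (i : nat) :
  (i <= k)%nat -> Cmod (x i - zb)%C <= init_dist k x zb.
Proof.
  intro Hi. apply (sum_f_R0_ge_term (fun i => Cmod (x i - zb)%C)); [| exact Hi].
  intro j. apply Cmod_ge_0.
Qed.

Lemma loc_asympt_stable_of_dominant_denominator (alpha beta gamma zb : C) (k : nat) :
  (zb * (gamma - zb))%C = (alpha + beta * zb)%C ->
  Cmod zb + Cmod beta < Cmod (gamma - zb) ->
  loc_asympt_stable alpha beta gamma k zb.
Proof.
  intros Hzb Hdom.
  destruct (contraction_margin (Cmod zb + Cmod beta) (Cmod (gamma - zb)))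
    as (q & r & Hq & [Hr Hrd] & Hmargin).
  { assert (H1 := Cmod_ge_0 zb). assert (H2 := Cmod_ge_0 beta). lra. }
  assert (Hdecay : forall x, is_solution alpha beta gamma k x ->
            init_dist k x zb <= r ->
            forall n j, (j * (k + 1) <= n)%nat ->
            Cmod (x n - zb)%C <= q ^ j * init_dist k x zb).
  { intros x Hx Hi.
    apply (error_decay zb beta (gamma - zb) k (fun n => x n - zb)%C q r);
      try lra.
    - exact (solution_error_rec alpha beta gamma zb k x Hzb Hx).
    - intros i Hik. exact (init_dist_ge k x zb i Hik). }
  split.
  - intros eps Heps. exists (Rmin eps r).
    split; [apply Rmin_glb_lt; lra |].
    intros x Hx Hi n.
    assert (H1 := Rmin_l eps r). assert (H2 := Rmin_r eps r).
    assert (H := Hdecay x Hx ltac:(lra) n 0%nat (Nat.le_0_l n)).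
    simpl in H. lra.
  - exists r. split; [exact Hr |].
    intros x Hx Hi eps Heps.
    set (M := init_dist k x zb).
    assert (HM0 : 0 <= M) by (assert (H := init_dist_ge k x zb 0 (Nat.le_0_l k));
                              assert (H0 := Cmod_ge_0 (x 0%nat - zb)%C); unfold M; lra).
    destruct (pow_mul_lt_eventually q M eps Hq HM0 Heps) as [J HJ].
    exists (J * (k + 1))%nat. intros n Hn.
    assert (H := Hdecay x Hx ltac:(unfold M in *; lra) n J Hn).
    fold M in H. lra.
Qed.

Theorem theorem2p1 (alpha beta gamma s : C) (k : nat) :
  (s * s)%C = ((beta - gamma) * (beta - gamma) - 4 * alpha)%C ->
  (s + beta + gamma)%C <> 0%C ->
  (alpha + beta * gamma)%C <> 0%C ->
  Cmod ((2 * beta) / (s + beta + gamma))%C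
    + Cmod ((gamma * (- s - beta + gamma) - 2 * alpha) / (2 * (alpha + beta * gamma)))%C < 1 ->
  let zb := (/ 2 * (- s - beta + gamma))%C in
  is_fixed_point alpha beta gamma zb /\ loc_asympt_stable alpha beta gamma k zb.
Proof.
  intros Hs Hsbg Hab Hlt zb.
  assert (HD : (gamma - zb)%C = (/ 2 * (s + beta + gamma))%C) by (unfold zb; field).
  assert (HD0 : (gamma - zb)%C <> 0%C).
  { rewrite HD. intro E. apply Hsbg.
    replace (s + beta + gamma)%C with (2 * (/ 2 * (s + beta + gamma)))%C by field.
    rewrite E. ring. }
  assert (Hzb : (zb * (gamma - zb))%C = (alpha + beta * zb)%C)
    by exact (quadratic_root_fixed_point_eq alpha beta gamma s Hs).
  split; [exact (is_fixed_point_of_eq _ _ _ _ Hzb HD0) |].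
  apply loc_asympt_stable_of_dominant_denominator; [exact Hzb |].
  assert (Hb : Cmod ((2 * beta) / (s + beta + gamma))%C = Cmod beta / Cmod (gamma - zb)).
  { rewrite <- Cmod_div by exact HD0. f_equal. rewrite HD. field. exact Hsbg. }
  assert (Hz : Cmod ((gamma * (- s - beta + gamma) - 2 * alpha) / (2 * (alpha + beta * gamma)))%C
               = Cmod zb / Cmod (gamma - zb)).
  { rewrite <- Cmod_div by exact HD0. f_equal.
    replace (- s - beta + gamma)%C with (2 * zb)%C by (unfold zb; field).
    replace alpha with (zb * (gamma - zb) - beta * zb)%C in Hab |- * by (rewrite Hzb; ring).
    replace (zb * (gamma - zb) - beta * zb + beta * gamma)%C
      with ((gamma - zb) * (zb + beta))%C in Hab |- * by ring.
    field. split; [exact HD0 |]. intro E. apply Hab. rewrite E. ring. }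
  rewrite Hb, Hz in Hlt.
  assert (HDpos : 0 < Cmod (gamma - zb)) by (apply Cmod_gt_0; exact HD0).
  apply Rmult_lt_reg_r with (/ Cmod (gamma - zb)); [apply Rinv_0_lt_compat; lra |].
  rewrite Rinv_r by lra. unfold Rdiv in Hlt. lra.
Qed.
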